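(* Let $k\geq 2$ and define $f(x,y)=(x+y)^{2}x^{2}-\left(x+\frac{y}{2}\right)^{2}(2x+y-2)$. If $k\leq x\leq k+(2k-1)^{2}$ and $0\leq y\leq (2k-1)^{2}$, then $f(x,y)>0$.
   Context: Here $x,y$ are real numbers. *)

From Stdlib Require Import Reals Lra.
Open Scope R_scope.

Definition f33 (x y : R) : R :=
  (x + y) ^ 2 * x ^ 2 - (x + y / 2) ^ 2 * (2 * x + y - 2).

(* As a polynomial in y, f(x, y) = c0 + c1 y + c2 y^2 - y^3/4 with c0 > 0 and c1, c2 >= 0
   for x >= 2. For such a cubic, g(y)/y^3 is decreasing on y > 0, so positivity at the
   right end point Y = (2x - 1)^2 of the interval propagates to all of [0, Y]; at Y the
   sign is checked directly. *)

From Stdlib Require Import Reals Lra Psatz.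
Open Scope R_scope.

Definition cubic (c0 c1 c2 d y : R) : R := c0 + c1 * y + c2 * y ^ 2 - d * y ^ 3.

Lemma cubic_pos_le (c0 c1 c2 d y Y : R) :
  0 < c0 -> 0 <= c1 -> 0 <= c2 -> 0 <= y -> y <= Y ->
  0 < cubic c0 c1 c2 d Y -> 0 < cubic c0 c1 c2 d y.
Proof.
unfold cubic; intros Hc0 Hc1 Hc2 Hy HyY HY.
destruct (Req_dec y Y) as [-> | HneY]; [exact HY |].
assert (Hlt : y < Y) by lra.
assert (Hscaled :
  Y ^ 3 * (c0 + c1 * y + c2 * y ^ 2 - d * y ^ 3) =
  c0 * (Y ^ 3 - y ^ 3) + c1 * y * Y * (Y ^ 2 - y ^ 2)
  + c2 * y ^ 2 * Y ^ 2 * (Y - y) + y ^ 3 * (c0 + c1 * Y + c2 * Y ^ 2 - d * Y ^ 3))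
  by ring.
assert (Hcubes : y ^ 3 < Y ^ 3).
{ replace (Y ^ 3) with (y ^ 3 + (Y - y) * (Y ^ 2 + Y * y + y ^ 2)) by ring.
  assert (0 < (Y - y) * (Y ^ 2 + Y * y + y ^ 2)) by (apply Rmult_lt_0_compat; nra).
  lra. }
assert (Hsquares : y ^ 2 <= Y ^ 2) by (apply pow_incr; lra).
assert (HyY3 : 0 <= y ^ 3) by (apply pow_le; lra).
assert (HY3 : 0 < Y ^ 3) by (apply pow_lt; lra).
assert (0 <= c1 * y * Y * (Y ^ 2 - y ^ 2)).
{ repeat apply Rmult_le_pos; lra. }
assert (0 <= c2 * y ^ 2 * Y ^ 2 * (Y - y)).
{ repeat apply Rmult_le_pos; try apply pow_le; lra. }
assert (0 <= y ^ 3 * (c0 + c1 * Y + c2 * Y ^ 2 - d * Y ^ 3)) by (apply Rmult_le_pos; lra).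
apply (Rmult_lt_reg_l (Y ^ 3)); nra.
Qed.

Lemma f33_cubic (x y : R) :
  f33 x y = cubic (x ^ 4 - 2 * x ^ 3 + 2 * x ^ 2) (2 * x ^ 3 - 3 * x ^ 2 + 2 * x)
                  (x ^ 2 - 3 * x / 2 + 1 / 2) (1 / 4) y.
Proof. unfold f33, cubic; field. Qed.

Lemma f33_at_square_pos (x : R) : 2 <= x -> 0 < f33 x ((2 * x - 1) ^ 2).
Proof.
intro Hx; unfold f33.
assert (0 <= x - 2) by lra.
assert (0 <= (x - 2) ^ 2) by nra.
nra.
Qed.

Lemma f33_pos (x y : R) : 2 <= x -> 0 <= y -> y <= (2 * x - 1) ^ 2 -> 0 < f33 x y.
Proof.
intros Hx Hy HyY; rewrite f33_cubic.
apply cubic_pos_le with ((2 * x - 1) ^ 2); try nra.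
rewrite <- f33_cubic; exact (f33_at_square_pos x Hx).
Qed.

Theorem lemma3p3 (k : nat) (x y : R) :
  (2 <= k)%nat ->
  INR k <= x -> x <= INR k + (2 * INR k - 1) ^ 2 ->
  0 <= y -> y <= (2 * INR k - 1) ^ 2 ->
  f33 x y > 0.
Proof.
intros Hk Hkx _ Hy HyK.
assert (H2k : 2 <= INR k) by (apply (le_INR 2) in Hk; simpl in Hk; lra).
apply f33_pos; [lra | exact Hy |].
apply Rle_trans with ((2 * INR k - 1) ^ 2); [exact HyK |].
apply pow_incr; lra.
Qed.
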